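(* Let $n$ be a positive integer such that every component of $2n+1$ is greater than $54$. Then there exists an $(80n+40,[2^n,6^n,18^n,54^n,40],40)$ partitioned difference family in $\mathbb{Z}_{40}\times\mathbb{F}_{2n+1}$.
   Context: The components of an integer $m$ are its maximal prime power factors, and $\mathbb{F}_m$ denotes the ring which is the direct product of the finite fields whose orders are the components of $m$; $\mathbb{Z}_{40}\times\mathbb{F}_{2n+1}$ is taken as an additive group. For $B$ a subset of a finite additive group $\Gamma$, $\Delta B$ is the multiset $\{x-y:x,y\in B,x\ne y\}$; for $\mathcal{F}=\{B_1,\dots,B_t\}$, $\Delta\mathcal{F}$ is the multiset union of the $\Delta B_i$. A $(v,[k_1,\dots,k_t],\lambda)$ partitioned difference family in $\Gamma$ ($|\Gamma|=v$) is a partition of $\Gamma$ into blocks $B_i$ with $|B_i|=k_i$ such that $\Delta\mathcal{F}$ contains every non-zero element exactly $\lambda$ times. Exponents denote multiplicities of block sizes. *)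

From HB Require Import structures.
From mathcomp Require Import all_boot all_order all_algebra.
Set Implicit Arguments. Unset Strict Implicit. Unset Printing Implicit Defensive.
Import GRing.Theory.
Local Open Scope ring_scope.

Definition components (m : nat) : seq nat :=
  [seq (p.1 ^ p.2)%N | p <- prime_decomp m].

Definition is_PDF (T : finType) (sub : T -> T -> T) (z : T)
    (v : nat) (ks : seq nat) (lam : nat) (blocks : seq {set T}) : Prop :=
  [/\ #|T| = v,
      (forall x : T, count (fun B : {set T} => x \in B) blocks = 1%N),
      perm_eq (map (fun B : {set T} => #|B|) blocks) ks
    & forall g : T, g != z ->
        (\sum_(B <- blocks)
           #|[set xy : T * T | [&& xy.1 \in B, xy.2 \in B, xy.1 != xy.2
                                 & sub xy.1 xy.2 == g]] |)%N = lam].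

(* Z_40 x F_m, where F_m = prod_i F i with F i a finite field of order the
   i-th component of m; only the additive structure is used. *)
Definition Gamma (k : nat) (F : 'I_k -> finFieldType) : finType :=
  ('Z_40 * {dffun forall i : 'I_k, F i})%type.

Definition Gamma_sub (k : nat) (F : 'I_k -> finFieldType)
    (x y : Gamma F) : Gamma F :=
  (x.1 - y.1, [ffun i => x.2 i - y.2 i]).

Definition Gamma_zero (k : nat) (F : 'I_k -> finFieldType) : Gamma F :=
  (0, [ffun i => 0]).

From HB Require Import structures.
From mathcomp Require Import all_boot all_order all_algebra.
From mathcomp Require Import fingroup cyclic zify.
Set Implicit Arguments. Unset Strict Implicit. Unset Printing Implicit Defensive.
Import GRing.Theory FinRing.Theory.

(* Let m = 2n + 1 and T = F_m. The components of m are odd, so T has odd order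
   and its nonzero elements fall into n pairs {x, -x}; S picks one element of
   each pair. Z_40 is split into cells of sizes 1, 3, 9, 27 such that every
   nonzero g is a difference of two elements of a common cell exactly 20 times.
   As every component of m exceeds 54, each component field has at least 27
   sign representatives; used as weights w(a), injective on each cell, they
   make w(a) + w(b) and w(a) - w(b) invertible for distinct a, b in a cell.
   The blocks are {(a, +-x w(a)) : a in cell j} for x in S and j < 4, together
   with Z_40 x {0}. Two signed points of a cell whose first coordinates differ
   by g give the difference (g, x d) with d = +-w(a) -+ w(b) invertible;
   flipping both signs negates d, and exactly one of h/d, -h/d lies in S, so the
   80 signed pairs above g produce each (g, h) with h <> 0 exactly 40 times,
   while the differences (g, 0) come only from Z_40 x {0}. *)

Section DffunZmodule.
Local Open Scope ring_scope.
Variables (aT : finType) (rT : aT -> finZmodType).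
Local Notation fT := {dffun forall x : aT, rT x}.

Definition dffun_add (f g : fT) : fT := [ffun x => f x + g x].
Definition dffun_opp (f : fT) : fT := [ffun x => - f x].

Fact dffun_addA : associative dffun_add.
Proof. by move=> f g h; apply/ffunP => x; rewrite !ffunE addrA. Qed.
Fact dffun_addC : commutative dffun_add.
Proof. by move=> f g; apply/ffunP => x; rewrite !ffunE addrC. Qed.
Fact dffun_add0 : left_id [ffun x => 0] dffun_add.
Proof. by move=> f; apply/ffunP => x; rewrite !ffunE add0r. Qed.
Fact dffun_addN : left_inverse [ffun x => 0] dffun_opp dffun_add.
Proof. by move=> f; apply/ffunP => x; rewrite !ffunE addNr. Qed.

HB.instance Definition _ :=
  Algebra.isZmodule.Build fT dffun_addA dffun_addC dffun_add0 dffun_addN.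

Lemma dffun0E x : (0 : fT) x = 0. Proof. exact: ffunE. Qed.
Lemma dffunNE (f : fT) x : (- f) x = - f x. Proof. exact: ffunE. Qed.
Lemma dffunBE (f g : fT) x : (f - g) x = f x - g x.
Proof. by rewrite ffunE dffunNE. Qed.

End DffunZmodule.

Section OddOrder.
Local Open Scope ring_scope.
Variable T : finZmodType.
Hypothesis oddT : odd #|T|.

Lemma odd_card_mulr2n_eq0 (x : T) : (x *+ 2 == 0) = (x == 0).
Proof.
apply/eqP/eqP => [x2|->]; last exact: mul0rn.
have := expg_cardG (in_setT x); rewrite cardsT zmodXgE zmod1gE.
by rewrite -(odd_double_half #|T|) oddT mulrSr -mul2n mulrnA x2 mul0rn add0r.
Qed.

Lemma odd_card_oppr_eq (x : T) : (- x == x) = (x == 0).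
Proof. by rewrite eq_sym -subr_eq0 opprK -mulr2n odd_card_mulr2n_eq0. Qed.

End OddOrder.

Lemma sum_nat_eq (I : finType) (A : {set I}) (u : I) :
  (\sum_(x in A) (x == u))%N = (u \in A).
Proof.
have [uA|uA] := boolP (u \in A).
  by rewrite (bigD1 u) //= eqxx big1 // => x /andP[_ /negbTE ->].
by rewrite big1 // => x xA; apply/eqP; rewrite eqb0; apply: contraNneq uA => <-.
Qed.

Lemma sum_nat_mem (I : finType) (A : {set I}) : (\sum_x (x \in A))%N = #|A|.
Proof. by rewrite -sum1_card [RHS]big_mkcond; apply: eq_bigr => x _; case: (x \in A). Qed.

Lemma sum_nat_eq_andb (I : finType) (i0 : I) (b : bool) : (\sum_i ((i0 == i) && b))%N = b.
Proof. by rewrite (bigD1 i0) //= eqxx big1 ?addn0 // => i /negbTE; rewrite eq_sym => ->. Qed.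

Lemma sum_pair (I J : finType) (F : I * J -> nat) : (\sum_u F u = \sum_i \sum_j F (i, j))%N.
Proof. by rewrite pair_bigA; apply: eq_bigr => -[]. Qed.

Lemma count_sum_nat (I : Type) (a : pred I) (s : seq I) : count a s = (\sum_(x <- s) a x)%N.
Proof. by rewrite -sumn_count sumnE big_map. Qed.

Lemma map_const (I J : Type) (c : J) (s : seq I) : [seq c | _ <- s] = nseq (size s) c.
Proof. by elim: s => //= _ s ->. Qed.

Section SignRepresentatives.
Local Open Scope ring_scope.
Variable T : finZmodType.
Implicit Types x u h : T.

Definition sign_reps : {set T} := [set x | (enum_rank x < enum_rank (- x))%N].

Lemma sign_reps0 : 0 \notin sign_reps.
Proof. by rewrite inE oppr0 ltnn. Qed.

Lemma sign_repsN x : x \in sign_reps -> - x \notin sign_reps.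
Proof. by rewrite !inE opprK => lt_x; rewrite ltnNge ltnW. Qed.

Lemma sign_reps_neq0 x : x \in sign_reps -> x != 0.
Proof. by apply: contraTneq => ->; apply: sign_reps0. Qed.

Hypothesis oddT : odd #|T|.

Lemma sign_repsNE x : ((x \in sign_reps) + (- x \in sign_reps))%N = (x != 0).
Proof.
have [->|x0] := eqVneq x 0; first by rewrite oppr0 (negbTE sign_reps0).
have : (enum_rank x : nat) != enum_rank (- x).
  by rewrite val_eqE (inj_eq enum_rank_inj) eq_sym odd_card_oppr_eq.
by rewrite !inE opprK; case: ltngtP.
Qed.

Lemma card_sign_reps : #|T| = (#|sign_reps|).*2.+1.
Proof.
have sumN : (\sum_x (- x \in sign_reps))%N = #|sign_reps|.
  by rewrite (reindex_inj oppr_inj) /=; under eq_bigr do rewrite opprK; apply: sum_nat_mem.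
have : (\sum_x ((x \in sign_reps) + (- x \in sign_reps)))%N = #|[set~ 0 : T]|.
  by rewrite -sum_nat_mem; apply: eq_bigr => x _; rewrite sign_repsNE !inE.
rewrite big_split /= sumN sum_nat_mem cardsC1 addnn => ->.
by rewrite prednK // (cardD1 0).
Qed.

Lemma sum_sign_reps_odd_inj (psi : T -> T) h : injective psi -> {morph psi : x / - x} ->
  (\sum_(x in sign_reps) ((psi x == h) + (psi x == - h)))%N = (h != 0).
Proof.
move=> psi_inj psiN; have psi0 : psi 0 = 0.
  by apply/eqP; rewrite -(odd_card_oppr_eq oddT) -psiN oppr0.
have [u ->] : exists u, h = psi u by exists (invF psi_inj h); rewrite f_invF.
transitivity (\sum_(x in sign_reps) ((x == u) + (x == - u)))%N.
  by apply: eq_bigr => x _; rewrite -psiN !(inj_eq psi_inj).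
by rewrite -[in RHS]psi0 (inj_eq psi_inj) big_split /= !sum_nat_eq sign_repsNE.
Qed.

End SignRepresentatives.

Section DifferenceCount.
Variables (G : finType) (sub : G -> G -> G).

Definition diff_count (B : {set G}) (z : G) : nat :=
  #|[set uv : G * G | [&& uv.1 \in B, uv.2 \in B, uv.1 != uv.2 & sub uv.1 uv.2 == z]]|.

Lemma diff_count_imset (I : finType) (f : I -> G) (A : {set I}) z : injective f ->
  diff_count (f @: A) z =
  #|[set pq : I * I | [&& pq.1 \in A, pq.2 \in A, pq.1 != pq.2 & sub (f pq.1) (f pq.2) == z]]|.
Proof.
move=> f_inj; pose f2 pq := (f pq.1, f pq.2).
have f2_inj : injective f2 by move=> [p q] [p' q'] [/f_inj-> /f_inj->].
rewrite /diff_count -(card_imset _ f2_inj); apply: eq_card => -[u v].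
rewrite inE /=; apply/and4P/imsetP => [[/imsetP[p pA ->] /imsetP[q qA ->] uv uvz] | ].
  by exists (p, q) => //; rewrite inE /= pA qA uvz andbT; apply: contraNneq uv => ->.
by case=> -[p q]; rewrite inE /= => /and4P[pA qA pq pqz] [-> ->]; rewrite !imset_f ?(inj_eq f_inj).
Qed.

End DifferenceCount.

Definition cell (H : finType) (r : nat) (cls : H -> 'I_r) (k : 'I_r) : {set H} :=
  [set a | cls a == k].

Section SignedBlocks.
Local Open Scope ring_scope.
Variables (H T : finZmodType) (r : nat) (cls : H -> 'I_r) (phi : H -> {additive T -> T}).
Hypothesis oddT : odd #|T|.
Hypothesis phi_eq0 : forall a x, phi a x = 0 -> x = 0.
Hypothesis phi_sep : forall a b x, cls a = cls b -> a != b ->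
  phi a x = phi b x \/ phi a x = - phi b x -> x = 0.

Local Notation S := (sign_reps T).
Local Notation point := (H * bool)%type.
Local Notation diff_count := (diff_count (fun u v : H * T => u - v)).

Definition signed (s : bool) (y : T) : T := if s then y else - y.

Lemma signedB s : {morph signed s : y z / y - z}.
Proof. by case: s => y z //=; rewrite opprD. Qed.

Lemma signedN s : {morph signed s : y / - y}.
Proof. by case: s. Qed.

Lemma signed_negb s y : signed (~~ s) y = - signed s y.
Proof. by case: s; rewrite /= ?opprK. Qed.

Definition embed (x : T) (p : point) : H * T := (p.1, signed p.2 (phi p.1 x)).

Definition block (k : 'I_r) (x : T) : {set H * T} := embed x @: setX (cell cls k) setT.

Definition axis : {set H * T} := [set (a, 0) | a in [set: H]].

Definition signed_blocks : seq {set H * T} :=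
  [seq block k x | k <- enum 'I_r, x <- enum S] ++ [:: axis].

Lemma phi_neq0 a x : x != 0 -> phi a x != 0.
Proof. exact: contra_neq (@phi_eq0 a x). Qed.

Lemma embed_inj x : x != 0 -> injective (embed x).
Proof.
move=> x0 [a s] [b t] [<- e_st]; congr pair.
have y0 := phi_neq0 a x0.
by case: s t e_st => [] [] // /eqP; rewrite ?[_ == - _]eq_sym (odd_card_oppr_eq oddT) (negbTE y0).
Qed.

Lemma mem_block k x z :
  (z \in block k x) = (cls z.1 == k) && ((phi z.1 x == z.2) || (phi z.1 x == - z.2)).
Proof.
case: z => a y /=; apply/imsetP/andP => [[[b s]] | [ak /orP[] /eqP e]].
- by rewrite !inE andbT => bk [-> ->]; split=> //; case: (s); rewrite /= ?opprK eqxx ?orbT.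
- by exists (a, true); rewrite ?inE ?ak // /embed /= e.
- by exists (a, false); rewrite ?inE ?ak // /embed /= e opprK.
Qed.

Lemma card_block k x : x != 0 -> #|block k x| = (#|cell cls k|).*2.
Proof. by move=> x0; rewrite card_imset ?cardsX ?cardsT ?card_bool ?muln2 //; apply: embed_inj. Qed.

Lemma mem_axis z : (z \in axis) = (z.2 == 0).
Proof.
case: z => a y; apply/imsetP/eqP => [[b _ [_ ->]] // | /= ->].
by exists a.
Qed.

Lemma count_signed_blocks (z : H * T) :
  count (fun B : {set H * T} => z \in B) signed_blocks = 1%N.
Proof.
case: z => a y; rewrite count_cat count_sum_nat big_allpairs_dep /= mem_axis addn0.
transitivity ((\sum_(x in S) ((phi a x == y) + (phi a x == - y)%R)) + (y == 0%R))%N.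
  congr addn; rewrite exchange_big big_enum /=; apply: eq_bigr => x xS.
  under eq_bigr do rewrite mem_block.
  rewrite big_enum /= sum_nat_eq_andb.
  have [e|] := eqVneq (phi a x) y; last by rewrite add0n.
  by rewrite -e eq_sym (odd_card_oppr_eq oddT) (negbTE (phi_neq0 a (sign_reps_neq0 xS))).
rewrite sum_sign_reps_odd_inj //; last exact: raddfN.
  by case: (y =P 0).
exact: raddf_inj (@phi_eq0 a).
Qed.

Definition diff_map (pq : point * point) (x : T) : T :=
  signed pq.1.2 (phi pq.1.1 x) - signed pq.2.2 (phi pq.2.1 x).

Lemma embedB x pq : embed x pq.1 - embed x pq.2 = (pq.1.1 - pq.2.1, diff_map pq x).
Proof. by []. Qed.

Lemma diff_mapB pq : {morph diff_map pq : x y / x - y}.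
Proof. by move=> x y; rewrite /diff_map !raddfB !signedB !opprD !opprK addrACA. Qed.

Lemma diff_mapN pq : {morph diff_map pq : x / - x}.
Proof. by move=> x; rewrite /diff_map !raddfN !signedN opprD. Qed.

Lemma diff_map_eq0 pq x : cls pq.1.1 = cls pq.2.1 -> pq.1 != pq.2 ->
  diff_map pq x = 0 -> x = 0.
Proof.
case: pq => -[a s] [b t] /= same neq /eqP; rewrite /diff_map /= subr_eq0 => /eqP e.
have [eab|ab] := eqVneq a b.
  subst b; have {neq} st : s != t by apply: contraNneq neq => ->.
  apply: (@phi_eq0 a); apply/eqP.
  by case: s t st e => [] [] //= _ /eqP; rewrite ?[_ == - _]eq_sym (odd_card_oppr_eq oddT).
apply: (phi_sep same ab).
case: s t {neq} e => [] [] /= e.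
- by left.
- by right.
- by right; rewrite -e opprK.
- by left; apply: oppr_inj.
Qed.

Definition flip (pq : point * point) : point * point :=
  ((pq.1.1, ~~ pq.1.2), (pq.2.1, ~~ pq.2.2)).

Lemma flipK : involutive flip.
Proof. by case=> -[a s] [b t]; rewrite /flip /= !negbK. Qed.

Lemma diff_map_flip pq x : diff_map (flip pq) x = - diff_map pq x.
Proof. by rewrite /diff_map /= !signed_negb opprD. Qed.

Definition diff_pairs (g : H) : {set point * point} :=
  [set pq | [&& cls pq.1.1 == cls pq.2.1, pq.1 != pq.2 & pq.1.1 - pq.2.1 == g]].

Lemma flip_diff_pairs g pq : (flip pq \in diff_pairs g) = (pq \in diff_pairs g).
Proof. by case: pq => -[a s] [b t]; rewrite !inE /= !xpair_eqE (inj_eq negb_inj). Qed.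

Lemma diff_map_inj g pq : pq \in diff_pairs g -> injective (diff_map pq).
Proof.
rewrite inE => /and3P[/eqP same neq _] x y /eqP.
by rewrite -subr_eq0 -diff_mapB => /eqP /(diff_map_eq0 same neq) /eqP; rewrite subr_eq0 => /eqP.
Qed.

Hypothesis cell_diff : forall g, g != 0 -> (#|[set a | cls a == cls (a - g)]|).*2 = #|H|.

Lemma sum_diff_pairs_row g p :
  (\sum_(q : point) ((p, q) \in diff_pairs g))%N =
  (\sum_(t : bool) ((cls p.1 == cls (p.1 - g)%R) && (p != ((p.1 - g)%R, t))))%N.
Proof.
rewrite sum_pair (bigD1 (p.1 - g)) //= [X in (_ + X)%N]big1 ?addn0.
  by apply: eq_bigr => t _; rewrite inE /= subKr eqxx andbT.
move=> b bg; apply: big1 => t _.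
by rewrite inE /= subr_eq addrC -subr_eq [_ - _ == _]eq_sym (negbTE bg) !andbF.
Qed.

Lemma card_diff_pairs g : #|diff_pairs g| = (#|H|).*2.
Proof.
rewrite -sum_nat_mem sum_pair; under eq_bigr do rewrite sum_diff_pairs_row.
have [->|g0] := eqVneq g 0.
  rewrite (eq_bigr (fun=> 1%N)) => [|[a s] _]; last first.
    by rewrite big_bool /= subr0 eqxx !xpair_eqE eqxx; case: s.
  by rewrite sum_nat_const card_prod card_bool muln1 muln2.
have a_neq a : (a == a - g) = false by apply/negbTE; rewrite -subr_eq0 subKr.
rewrite (eq_bigr (fun p : point => (cls p.1 == cls (p.1 - g)).*2)) => [|[a s] _]; last first.
  by rewrite big_bool /= !xpair_eqE a_neq /= !andbT addnn.
rewrite sum_pair /=; under eq_bigr do rewrite big_bool /= addnn.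
rewrite -(cell_diff g0) -sum_nat_mem -!(big_morph double doubleD double0).
by congr (_.*2.*2); apply: eq_bigr => a _; rewrite inE.
Qed.

Lemma sum_diff_pairs_sign_reps g h :
  (\sum_(pq in diff_pairs g) \sum_(x in S) (diff_map pq x == h))%N = ((h != 0%R) * #|H|)%N.
Proof.
apply: double_inj; rewrite -[in LHS]addnn {1}(reindex_inj (inv_inj flipK)) /=.
rewrite (eq_bigl _ _ (flip_diff_pairs g)) -big_split /=.
transitivity (\sum_(pq in diff_pairs g) (h != 0%R))%N.
  apply: eq_bigr => pq pqD; rewrite -big_split /=.
  under eq_bigr do rewrite diff_map_flip eqr_oppLR addnC.
  by rewrite sum_sign_reps_odd_inj //; [apply: diff_map_inj pqD | apply: diff_mapN].
by rewrite sum_nat_const card_diff_pairs mulnC doubleMr.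
Qed.

Lemma diff_count_block k x z : x != 0 ->
  diff_count (block k x) z =
  (\sum_(pq in diff_pairs z.1) ((cls pq.1.1 == k) && (diff_map pq x == z.2)))%N.
Proof.
case: z => g h x0; rewrite diff_count_imset; last exact: embed_inj.
rewrite -sum_nat_mem [RHS]big_mkcond /=; apply: eq_bigr => -[p q] _.
rewrite !inE embedB /= [(_, _) == (g, h)]xpair_eqE !andbT.
case: (cls p.1 =P k) => [<-|_]; last by case: ifP.
by rewrite [cls q.1 == _]eq_sym; case: (cls p.1 == cls q.1); case: (p != q); case: (p.1 - q.1 == g).
Qed.

Lemma sum_diff_count_blocks z :
  (\sum_(k < r) \sum_(x in S) diff_count (block k x) z)%N = ((z.2 != 0%R) * #|H|)%N.
Proof.
rewrite -(sum_diff_pairs_sign_reps z.1) exchange_big [RHS]exchange_big /=.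
apply: eq_bigr => x xS; under eq_bigr do rewrite diff_count_block ?sign_reps_neq0 //.
by rewrite exchange_big /=; apply: eq_bigr => pq _; rewrite sum_nat_eq_andb.
Qed.

Lemma diff_count_axis z : z != 0 -> diff_count axis z = ((z.2 == 0%R) * #|H|)%N.
Proof.
case: z => g h z0; rewrite diff_count_imset => [|a b [] //].
have [h0 | h0] /= := eqVneq h 0; last first.
  apply/eqP; rewrite cards_eq0; apply/eqP/setP => ab; rewrite !inE xpair_eqE subr0.
  by rewrite /= [_ == h]eq_sym (negbTE h0) !andbF.
subst h; have g0 : g != 0 by apply: contraNneq z0 => ->.
have f_inj : injective (fun a : H => (a, a - g)) by move=> a b [].
rewrite mul1n -cardsT -(card_imset _ f_inj); apply: eq_card => -[a b].
rewrite !inE /= (_ : (a, 0) - (b, 0) = (a - b, 0 - 0)) // subr0 xpair_eqE eqxx andbT.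
apply/andP/imsetP => [[_ /eqP <-] | [c _ [-> ->]]]; first by exists a; rewrite ?inE ?subKr.
by rewrite subKr eqxx -subr_eq0 subKr.
Qed.

Lemma card_axis : #|axis| = #|H|.
Proof. by rewrite card_imset ?cardsT // => a b []. Qed.

Theorem signed_blocks_PDF :
  is_PDF (fun u v : H * T => u - v) 0 (#|H| * #|T|)
    (flatten [seq nseq #|S| (#|cell cls k|).*2 | k <- enum 'I_r] ++ [:: #|H|])
    #|H| signed_blocks.
Proof.
split.
- by rewrite card_prod.
- exact: count_signed_blocks.
- set sizes := (_ ++ _); suff -> : [seq #|B| | B : {set H * T} <- signed_blocks] = sizes by [].
  rewrite map_cat map_flatten -map_comp /= card_axis; congr (flatten _ ++ _).
  apply: eq_map => k /=; rewrite (cardE S) -map_const.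
  rewrite -map_comp; apply/eq_in_map => x; rewrite mem_enum => /sign_reps_neq0 x0.
  exact: card_block.
- move=> z z0; change (\sum_(B <- signed_blocks) diff_count B z = #|H|)%N.
  rewrite big_cat big_allpairs_dep big_seq1 big_enum /= (eq_bigl xpredT) //.
  under eq_bigr do rewrite big_enum /=.
  by rewrite sum_diff_count_blocks diff_count_axis //; case: (z.2 == 0); rewrite ?mul0n ?mul1n ?addn0.
Qed.

End SignedBlocks.

Section FieldWeights.
Local Open Scope ring_scope.
Variables (k : nat) (F : 'I_k -> finFieldType) (H : finType) (r : nat) (cls : H -> 'I_r).
Local Notation T := {dffun forall i : 'I_k, F i}.

Definition cell_rank (a : H) : nat := index a (enum (cell cls (cls a))).

Lemma cell_rank_lt a : (cell_rank a < #|cell cls (cls a)|)%N.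
Proof. by rewrite /cell_rank cardE index_mem mem_enum inE. Qed.

Lemma cell_rank_inj a b : cls a = cls b -> cell_rank a = cell_rank b -> a = b.
Proof.
rewrite /cell_rank => eab; rewrite eab => /(congr1 (nth a (enum (cell cls (cls b))))).
by rewrite !nth_index // mem_enum inE ?eab.
Qed.

Definition weight i (a : H) : F i := nth 0 (enum (sign_reps (F i))) (cell_rank a).

Definition scale (a : H) (x : T) : T := [ffun i => x i * weight i a].

Fact scale_is_zmod_morphism a : zmod_morphism (scale a).
Proof. by move=> x y; apply/ffunP => i; rewrite !(ffunE, dffunBE) mulrBl. Qed.

HB.instance Definition _ a :=
  Algebra.isZmodMorphism.Build T T (scale a) (scale_is_zmod_morphism a).

Hypothesis cell_small : forall i j, (#|cell cls j| <= #|sign_reps (F i)|)%N.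

Lemma weight_sign_reps i a : weight i a \in sign_reps (F i).
Proof.
by rewrite -mem_enum /weight mem_nth // -cardE (leq_trans (cell_rank_lt a) (cell_small i _)).
Qed.

Lemma weight_inj i a b : cls a = cls b -> weight i a = weight i b -> a = b.
Proof.
have lt_rank c : (cell_rank c < size (enum (sign_reps (F i))))%N.
  by rewrite -cardE (leq_trans (cell_rank_lt c) (cell_small i _)).
move=> eab /eqP; rewrite /weight nth_uniq ?enum_uniq //.
by move/eqP; apply: cell_rank_inj.
Qed.

Lemma scale_eq0 a x : scale a x = 0 -> x = 0.
Proof.
move/ffunP => sx0; apply/ffunP => i; have /eqP := sx0 i.
rewrite !(ffunE, dffun0E) mulf_eq0 (negbTE (sign_reps_neq0 (weight_sign_reps i a))) orbF.
by move/eqP.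
Qed.

Lemma scale_sep a b x : cls a = cls b -> a != b ->
  scale a x = scale b x \/ scale a x = - scale b x -> x = 0.
Proof.
move=> eab ab e; apply/ffunP => i; rewrite dffun0E.
have : x i * (weight i a - weight i b) = 0 \/ x i * (weight i a + weight i b) = 0.
  case: e => /ffunP/(_ i); rewrite !(ffunE, dffunNE) => e; [left | right].
    by rewrite mulrBr e subrr.
  by rewrite mulrDr e addNr.
case=> /eqP; rewrite mulf_eq0 => /orP[/eqP // | ]; rewrite ?subr_eq0 ?addr_eq0 => /eqP e'.
  by move: ab; rewrite (weight_inj eab e') eqxx.
by have := sign_repsN (weight_sign_reps i b); rewrite -e' weight_sign_reps.
Qed.

End FieldWeights.

Definition z40_cell_of (a : nat) : nat :=
  if a == 0 then 0
  else if a \in [:: 10; 20; 30] then 1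
  else if a \in [:: 1; 6; 9; 12; 13; 14; 28; 35; 37] then 2
  else 3.

Definition z40_cls (a : 'Z_40) : 'I_4 := inord (z40_cell_of a).

Lemma z40_clsE a : z40_cls a = z40_cell_of a :> nat.
Proof. by rewrite inordK // /z40_cell_of; repeat case: ifP. Qed.

Lemma card_Z40_pred (P : pred nat) : #|[set a : 'Z_40 | P a]| = count P (iota 0 40).
Proof.
rewrite -sum1_card (eq_bigl (fun a : 'I_40 => P a)) => [|a]; last by rewrite inE.
by rewrite -(big_mkord P (fun _ => 1)) sum1_count.
Qed.

Lemma val_Z40B (a g : 'Z_40) : val (a - g)%R = (a + 40 - g) %% 40.
Proof. by case: a g => a lt_a [g lt_g] /=; rewrite modnDmr addnBA // ltnW. Qed.

Lemma card_Z40 : #|'Z_40| = 40.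
Proof. exact: card_ord. Qed.

Lemma z40_cell_sizes : [seq #|cell z40_cls j| | j <- enum 'I_4] = [:: 1; 3; 9; 27].
Proof.
transitivity [seq count (fun a => z40_cell_of a == j) (iota 0 40) | j <- iota 0 4]; last first.
  by vm_compute.
rewrite -[iota 0 4]val_enum_ord -[RHS]map_comp; apply: eq_map => j.
apply: etrans _ (card_Z40_pred _); apply: eq_card => a.
by rewrite !inE -val_eqE /= z40_clsE.
Qed.

Lemma z40_cell_le j : #|cell z40_cls j| <= 27.
Proof.
have : #|cell z40_cls j| \in [seq #|cell z40_cls j| | j <- enum 'I_4] by rewrite map_f ?mem_enum.
by rewrite z40_cell_sizes !inE => /or4P[] /eqP ->.
Qed.

Lemma z40_cell_diff (g : 'Z_40) : g != 0%R ->
  (#|[set a | z40_cls a == z40_cls (a - g)%R]|).*2 = #|'Z_40|.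
Proof.
have table : all (fun g => (count (fun a => z40_cell_of a == z40_cell_of ((a + 40 - g) %% 40))
                                  (iota 0 40)).*2 == 40) (iota 1 39) by vm_compute.
move=> g0; rewrite card_Z40.
have : val g \in iota 1 39.
  by rewrite mem_iota ltn_ord andbT lt0n; apply: contra g0 => /eqP gz; apply/eqP/val_inj.
move=> /(allP table) /eqP count_g; apply: etrans _ count_g; congr double.
rewrite -card_Z40_pred.
by apply: eq_card => a; rewrite !inE -val_eqE /= !z40_clsE val_Z40B.
Qed.

Lemma components_dvdn m q : q \in components m -> q %| m.
Proof. by case/mapP => -[p e] /mem_prime_decomp[_ _ dv] ->. Qed.

Lemma card_dffun_components m (F : 'I_(size (components m)) -> finFieldType) :
  0 < m -> (forall i, #|F i| = nth 0 (components m) i) ->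
  #|{dffun forall i : 'I_(size (components m)), F i}| = m.
Proof.
move=> m_gt0 cardF; rewrite card_dep_ffun foldrE big_map big_enum /=.
under eq_bigr do rewrite cardF.
rewrite -(big_mkord xpredT (nth 0 (components m))) -(big_nth 0 xpredT id).
by rewrite /components big_map [RHS](prod_prime_decomp m_gt0).
Qed.

Lemma Gamma_subE k (F : 'I_k -> finFieldType) (x y : Gamma F) : Gamma_sub x y = (x - y)%R.
Proof. by congr pair; apply/ffunP => i; rewrite !ffunE. Qed.

Lemma is_PDF_Gamma k (F : 'I_k -> finFieldType) v ks lam (blocks : seq {set Gamma F}) :
  is_PDF (fun x y : Gamma F => (x - y)%R) 0%R v ks lam blocks ->
  is_PDF (@Gamma_sub _ F) (Gamma_zero F) v ks lam blocks.
Proof.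
case=> cardG part sizes diffs; split=> // z z0; rewrite -(diffs z z0).
by apply: eq_bigr => B _; apply: eq_card => uv; rewrite !inE Gamma_subE.
Qed.

Theorem corollary7p4 (n : nat)
    (F : 'I_(size (components n.*2.+1)) -> finFieldType)
    (hF : forall i, #|F i| = nth 0%N (components n.*2.+1) i)
    (hn : (0 < n)%N)
    (hcomp : all (fun q => (54 < q)%N) (components n.*2.+1)) :
  exists blocks : seq {set Gamma F},
    is_PDF (@Gamma_sub _ F) (Gamma_zero F) (80 * n + 40)
      (nseq n 2 ++ nseq n 6 ++ nseq n 18 ++ nseq n 54 ++ [:: 40])%N
      40 blocks.
Proof.
have oddF i : odd #|F i|.
  by rewrite hF (dvdn_odd (components_dvdn (mem_nth 0 (ltn_ord i)))) //= odd_double.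
have cardT : #|{dffun forall i, F i}| = n.*2.+1 by apply: card_dffun_components.
have oddT : odd #|{dffun forall i, F i}| by rewrite cardT /= odd_double.
have cardS : #|sign_reps {dffun forall i, F i}| = n.
  by apply/double_inj/succn_inj; rewrite -card_sign_reps.
have cell_small i j : #|cell z40_cls j| <= #|sign_reps (F i)|.
  have gt54 : 54 < #|F i| by rewrite hF; apply: (allP hcomp); apply: mem_nth.
  rewrite (card_sign_reps (oddF i)) -addnn in gt54.
  by apply: leq_trans (z40_cell_le j) _; lia.
have := signed_blocks_PDF oddT (scale_eq0 cell_small) (scale_sep cell_small) z40_cell_diff.
rewrite card_Z40 cardT cardS (map_comp (fun c => nseq n c.*2)) z40_cell_sizes /=.
rewrite -!catA (_ : 40 * n.*2.+1 = 80 * n + 40); last by lia.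
by move/is_PDF_Gamma=> pdf; eexists; exact: pdf.
Qed.
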